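(* Let $R\subseteq S$, $\sigma$ be as in the context, and $n=n_1+\cdots+n_\ell$. Let $\mathbf{a}=(a_1,\ldots,a_\ell)\in(S^* )^\ell$ and $\beta_{i,j}\in S$ ($1\le i\le\ell$, $1\le j\le n_i$) satisfy: (i) $a_i-a_j^\beta\in S^*$ for all $\beta\in S^*$ and $1\le i<j\le\ell$; (ii) for each $i$, $\beta_{i,1},\ldots,\beta_{i,n_i}$ are $R$-linearly independent. Let $c_{i,j}\in S$ for $1\le j\le n_i$, $1\le i\le\ell$. Then there exists a unique skew polynomial $F\in S[x;\sigma]$ with $\deg(F)\le n-1$ and $F_{a_i}(\beta_{i,j})=c_{i,j}$ for all $1\le j\le n_i$, $1\le i\le\ell$.
   Context: $R$ is a finite commutative chain ring with maximal ideal $\mathfrak{m}$, $q=|R/\mathfrak{m}|$; $S=R[x]/(h)$ with $h$ monic of degree $m$ irreducible modulo $\mathfrak{m}$, local with maximal ideal $\mathfrak{M}=\mathfrak{m}S$ and unit group $S^*=S\setminus\mathfrak{M}$. $\sigma$ is a ring automorphism of $S$ generating the Galois group of $R\subseteq S$, with fixed ring $R$, reducing modulo $\mathfrak{M}$ to $y\mapsto y^q$. $S[x;\sigma]$ is the skew polynomial ring with $xa=\sigma(a)x$; the zero polynomial has degree $-\infty$. For $a,\beta\in S$: $N_i(a)=\sigma^{i-1}(a)\cdots\sigma(a)a$, $\mathcal{D}_a^i(\beta)=\sigma^i(\beta)N_i(a)$, and for $F=\sum_iF_ix^i$, $F_a(\beta)=\sum_iF_i\mathcal{D}_a^i(\beta)$.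 For $\beta\in S^*$, $a^\beta=\sigma(\beta)a\beta^{-1}$. *)

From HB Require Import structures.
From mathcomp Require Import all_boot all_order all_algebra.
Set Implicit Arguments. Unset Strict Implicit. Unset Printing Implicit Defensive.
Import GRing.Theory.
Local Open Scope ring_scope.

Definition is_ideal (R : finComUnitRingType) (I : {set R}) : Prop :=
  0 \in I /\ (forall x y, x \in I -> y \in I -> x + y \in I) /\
  (forall r x, x \in I -> r * x \in I).

Definition chain_ring (R : finComUnitRingType) : Prop :=
  forall I J : {set R}, is_ideal I -> is_ideal J -> (I \subset J) || (J \subset I).

Definition max_ideal (R : finComUnitRingType) : {set R} :=
  [set r : R | r \isn't a GRing.unit].

Definition resq (R : finComUnitRingType) : nat := #|R| %/ #|max_ideal R|.

Definition irreducible_mod_m (R : finComUnitRingType) (h : {poly R}) : Prop :=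
  (1 < size h)%N /\
  ~ (exists f g : {poly R}, (size f < size h)%N /\ (size g < size h)%N /\
       forall k, (h - f * g)`_k \in max_ideal R).

Definition ext_ideal (R S : finComUnitRingType) (iota : {rmorphism R -> S}) (s : S) : Prop :=
  exists (k : nat) (r : 'I_k -> R) (t : 'I_k -> S),
    (forall i, r i \in max_ideal R) /\ s = \sum_(i < k) iota (r i) * t i.

(* S is (isomorphic, via iota and theta, to) R[x]/(h): theta is a root of h and
   1, theta, ..., theta^(m-1) is an R-basis of S, m = deg h. *)
Definition is_quotient_by (R S : finComUnitRingType) (iota : {rmorphism R -> S})
    (h : {poly R}) (theta : S) : Prop :=
  (map_poly iota h).[theta] = 0 /\
  bijective (fun r : {ffun 'I_(size h).-1 -> R} =>
               \sum_(i < (size h).-1) iota (r i) * theta ^+ i).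

(* Skew polynomial evaluation. A skew polynomial F = sum_i F_i x^i in
   S[x;sigma] is represented by its coefficient list (a {poly S}); degrees
   and equality are coefficientwise, so this is faithful. *)
Definition Nnorm (S : finComUnitRingType) (sigma : S -> S) (i : nat) (a : S) : S :=
  \prod_(k < i) iter k sigma a.

Definition Dop (S : finComUnitRingType) (sigma : S -> S) (a : S) (i : nat) (b : S) : S :=
  iter i sigma b * Nnorm sigma i a.

Definition skew_eval (S : finComUnitRingType) (sigma : S -> S) (F : {poly S}) (a b : S) : S :=
  \sum_(i < size F) F`_i * Dop sigma a i b.

Definition sconj (S : finComUnitRingType) (sigma : S -> S) (a b : S) : S :=
  sigma b * a * b^-1.

From HB Require Import structures.
From mathcomp Require Import all_boot all_order all_algebra all_fingroup.
From mathcomp Require Import ring.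
Set Implicit Arguments. Unset Strict Implicit. Unset Printing Implicit Defensive.
Import GRing.Theory.
Local Open Scope ring_scope.

(* Interpolation proceeds node by node. For nodes (a_1, beta_1), ..., (a_n, beta_n)
   one builds by induction a monic P = (x - b_n) ... (x - b_1) of degree n vanishing
   at them, with the invariant that P_a(u) is a non-unit exactly when u is congruent,
   modulo the maximal ideal, to an R-combination of the earlier betas attached to a.
   The R-independence of these betas and the non-conjugacy of the a's then make P a
   unit at the next node, which yields both the next factor and the correction
   F + s P of the interpolant; uniqueness holds because a polynomial of degree < n
   vanishing at such n nodes is zero.
   The invariant rests on three facts about R in S: S is local, an element fixed by
   sigma modulo the maximal ideal is congruent to an element of R (these are the
   roots of X^q - X), and a nonzero element of R killing m kills the maximal ideal
   of S (by the Frobenius congruence and the finite order of sigma). *)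

Section SkewEvaluation.
Variables (S : finComUnitRingType) (sigma : {rmorphism S -> S}).
Local Notation ev F a b := (skew_eval sigma F a b).

Lemma iter_rmorphD k (x y : S) : iter k sigma (x + y) = iter k sigma x + iter k sigma y.
Proof. by elim: k => //= k ->; rewrite rmorphD. Qed.

Lemma iter_rmorphM k (x y : S) : iter k sigma (x * y) = iter k sigma x * iter k sigma y.
Proof. by elim: k => //= k ->; rewrite rmorphM. Qed.

Lemma iter_fixed k (x : S) : sigma x = x -> iter k sigma x = x.
Proof. by move=> sx; elim: k => //= k ->. Qed.

Lemma Dop0 a b : Dop sigma a 0 b = b.
Proof. by rewrite /Dop /Nnorm big_ord0 mulr1. Qed.

Lemma DopS i a b : Dop sigma a i.+1 b = sigma (Dop sigma a i b) * a.
Proof.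
rewrite /Dop /Nnorm big_ord_recl [_ * a]mulrC rmorphM rmorph_prod /= -iterS.
by rewrite mulrCA mulrA.
Qed.

Lemma Dop_fixed_linear c a i u v : sigma c = c ->
  Dop sigma a i (c * u + v) = c * Dop sigma a i u + Dop sigma a i v.
Proof.
by move=> sc; rewrite /Dop iter_rmorphD iter_rmorphM iter_fixed // mulrDl mulrA.
Qed.

Lemma skew_eval_widen (F : {poly S}) a b N : (size F <= N)%N ->
  ev F a b = \sum_(i < N) F`_i * Dop sigma a i b.
Proof.
move=> hN; rewrite /skew_eval (big_ord_widen N (fun i => F`_i * Dop sigma a i b) hN).
rewrite [RHS](bigID (fun i : 'I_N => (i < size F)%N)) /= [X in _ = _ + X]big1 ?addr0 //.
by move=> i; rewrite -leqNgt => hi; rewrite nth_default // mul0r.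
Qed.

Lemma skew_eval1 a b : ev 1 a b = b.
Proof. by rewrite /skew_eval size_poly1 big_ord1 coefC eqxx mul1r Dop0. Qed.

Lemma skew_evalD (F G : {poly S}) a b : ev (F + G) a b = ev F a b + ev G a b.
Proof.
pose N := maxn (size F) (size G).
rewrite (@skew_eval_widen F a b N) ?leq_maxl // (@skew_eval_widen G a b N) ?leq_maxr //.
rewrite (@skew_eval_widen (F + G) a b N) ?(leq_trans (size_polyD _ _)) // -big_split /=.
by apply: eq_bigr => i _; rewrite coefD mulrDl.
Qed.

Lemma skew_evalZ s (F : {poly S}) a b : ev (s *: F) a b = s * ev F a b.
Proof.
rewrite (skew_eval_widen a b (size_scale_leq s F)) /skew_eval mulr_sumr.
by apply: eq_bigr => i _; rewrite coefZ mulrA.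
Qed.

Lemma skew_evalB (F G : {poly S}) a b : ev (F - G) a b = ev F a b - ev G a b.
Proof. by rewrite skew_evalD -scaleN1r skew_evalZ mulN1r. Qed.

Lemma skew_eval_fixed_linear c (F : {poly S}) a u v : sigma c = c ->
  ev F a (c * u + v) = c * ev F a u + ev F a v.
Proof.
move=> sc; rewrite /skew_eval mulr_sumr -big_split; apply: eq_bigr => i _ /=.
by rewrite Dop_fixed_linear // mulrDr mulrCA.
Qed.

(* The coefficients of the skew product (x - b) P in S[x;sigma]. *)
Definition skew_mulXsub (b : S) (P : {poly S}) : {poly S} :=
  \poly_(i < (size P).+1) ((if i is i'.+1 then sigma P`_i' else 0) - b * P`_i).

Lemma skew_eval_mulXsub b P a u :
  ev (skew_mulXsub b P) a u = sigma (ev P a u) * a - b * ev P a u.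
Proof.
rewrite (skew_eval_widen a u (size_poly _ _)) (skew_eval_widen a u (leqnSn (size P))).
rewrite /skew_eval rmorph_sum mulr_suml mulr_sumr.
under eq_bigr => i _ do rewrite coef_poly ltn_ord mulrBl -mulrA.
rewrite sumrB; congr (_ - _).
rewrite big_ord_recl /= mul0r add0r big_ord_recr /= nth_default // !mul0r rmorph0 mul0r addr0.
by apply: eq_bigr => i _; rewrite /bump /= add1n add0n DopS [in RHS]rmorphM mulrA.
Qed.

Lemma skew_mulXsub_monic b P : P \is monic ->
  skew_mulXsub b P \is monic /\ size (skew_mulXsub b P) = (size P).+1.
Proof.
move=> Pm; have [k sP] : exists k, size P = k.+1.
  by exists (size P).-1; rewrite prednK // size_poly_gt0 monic_neq0.
have lead : (skew_mulXsub b P)`_k.+1 = 1.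
  have Pk : P`_k = 1 by rewrite -(monicP Pm) lead_coefE sP.
  by rewrite coef_poly sP ltnSn Pk rmorph1 nth_default ?sP // mulr0 subr0.
have size_eq : size (skew_mulXsub b P) = k.+2.
  apply/eqP; rewrite eqn_leq -{1}sP size_poly /= ltnNge.
  by apply/negP => /leq_sizeP/(_ _ (leqnn _)); rewrite lead; apply/eqP; exact: oner_neq0.
by rewrite monicE lead_coefE size_eq lead sP.
Qed.

End SkewEvaluation.

Definition local_ring (T : comUnitRingType) :=
  forall x y : T, x \isn't a GRing.unit -> y \isn't a GRing.unit ->
    x + y \isn't a GRing.unit.

Lemma nonunitMr (T : comUnitRingType) (x y : T) :
  x \isn't a GRing.unit -> x * y \isn't a GRing.unit.
Proof. by rewrite unitrM; apply: contra => /andP[]. Qed.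

Lemma nonunitMl (T : comUnitRingType) (x y : T) :
  y \isn't a GRing.unit -> x * y \isn't a GRing.unit.
Proof. by rewrite mulrC; apply: nonunitMr. Qed.

Section LocalRing.
Variable T : comUnitRingType.
Hypothesis Tloc : local_ring T.

Lemma nonunitB (x y : T) : x \isn't a GRing.unit -> y \isn't a GRing.unit ->
  x - y \isn't a GRing.unit.
Proof. by move=> nx ny; apply: Tloc; rewrite ?unitrN. Qed.

Lemma unitrD_nonunit (x y : T) : x \is a GRing.unit -> y \isn't a GRing.unit ->
  x + y \is a GRing.unit.
Proof.
move=> ux ny; apply: contraT => nxy.
by have := Tloc nxy (y := - y); rewrite unitrN addrK ux => /(_ ny).
Qed.

Lemma monic_nonunit_roots (p : {poly T}) (s : seq T) : p \is monic ->
  pairwise (fun x y => x - y \is a GRing.unit) s ->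
  (forall x, x \in s -> p.[x] \isn't a GRing.unit) -> (size s < size p)%N.
Proof.
elim: s p => [|x s IH] p pm /=; first by rewrite size_poly_gt0 monic_neq0.
case/andP => /allP incong_x incong_s roots.
have px : p.[x] \isn't a GRing.unit by apply: roots; rewrite mem_head.
have p_gt1 : (1 < size p)%N.
  rewrite ltnNge; apply/negP => /size1_polyC p_const; move: px.
  have p0 : p`_0 = 1 by rewrite -(monicP pm) [in RHS]p_const lead_coefC.
  by rewrite p_const hornerC p0 unitr1.
have px_small : (size (- p.[x]%:P) < size p)%N.
  by rewrite size_polyN size_polyC (leq_ltn_trans (leq_b1 _)).
have [q p_eq] : exists q, p - p.[x]%:P = q * ('X - x%:P).
  by apply/factor_theorem; rewrite /root !hornerE subrr.
have qm : q \is monic.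
  by rewrite -(monicMr q (monicXsubC x)) -p_eq monicE lead_coefDl // (monicP pm).
have size_q : size q = (size p).-1.
  rewrite -(size_polyDl px_small) p_eq size_Mmonic ?monic_neq0 ?monicXsubC //.
  by rewrite size_XsubC addn2.
have : (size s < size q)%N.
  apply: IH => // y ys.
  have : (p - p.[x]%:P).[y] \isn't a GRing.unit.
    rewrite !hornerE; apply: nonunitB => //.
    by apply: roots; rewrite in_cons ys orbT.
  by rewrite p_eq hornerM !hornerE unitrM -opprB unitrN incong_x // andbT.
by rewrite size_q; case: (size p) p_gt1.
Qed.

End LocalRing.

Definition fiber (T : eqType) (pts : seq (T * T)) (x : T) : seq T :=
  [seq p.2 | p <- pts & p.1 == x].

Lemma fiber_rcons (T : eqType) (pts : seq (T * T)) p x :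
  fiber (rcons pts p) x = if p.1 == x then rcons (fiber pts x) p.2 else fiber pts x.
Proof. by rewrite /fiber filter_rcons; case: ifP; rewrite ?map_rcons. Qed.

Section Interpolation.
Variables (R : nzRingType) (S : finComUnitRingType) (iota : {rmorphism R -> S}).
Variable sigma : {rmorphism S -> S}.
Hypothesis HS_local : local_ring S.
Hypothesis Hsigma_nonunit : forall x, x \isn't a GRing.unit -> sigma x \isn't a GRing.unit.
Hypothesis Hsigma_iota : forall r, sigma (iota r) = iota r.
Hypothesis Hresidue_fixed : forall rho, sigma rho - rho \isn't a GRing.unit ->
  exists r, rho - iota r \isn't a GRing.unit.
Variable z : R.
Hypothesis Hz_neq0 : z != 0.
Hypothesis Hz_ann : forall x, x \isn't a GRing.unit -> iota z * x = 0.
Variable A : S -> Prop.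
Hypothesis HA_unit : forall x, A x -> x \is a GRing.unit.
Hypothesis HA_nonconj : forall x y, A x -> A y -> x <> y ->
  forall d, d \is a GRing.unit -> sconj sigma x d - y \is a GRing.unit.

Local Notation ev F x u := (skew_eval sigma F x u).

Definition comb (L : seq S) (r : nat -> R) := \sum_(t < size L) iota (r t) * L`_t.

Definition free_over (L : seq S) :=
  forall r, comb L r = 0 -> forall t, (t < size L)%N -> r t = 0.

Definition near_span (L : seq S) u := exists r, u - comb L r \isn't a GRing.unit.

Lemma comb_rcons L b r : comb (rcons L b) r = comb L r + iota (r (size L)) * b.
Proof.
rewrite /comb size_rcons big_ord_recr /= nth_rcons ltnn eqxx; congr (_ + _).
by apply: eq_bigr => t _; rewrite nth_rcons ltn_ord.
Qed.

Lemma eq_comb L r r' : (forall t, (t < size L)%N -> r t = r' t) -> comb L r = comb L r'.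
Proof. by move=> rr'; apply: eq_bigr => t _; rewrite rr'. Qed.

Lemma free_over_rcons L b : free_over (rcons L b) -> free_over L.
Proof.
move=> free r rL0 t tL; pose r' t := if (t < size L)%N then r t else 0.
have := free r'; rewrite comb_rcons /r' ltnn rmorph0 mul0r addr0 size_rcons.
rewrite (@eq_comb _ _ r) => [/(_ rL0 t (ltnW tL)) | t' ->] //.
by rewrite tL.
Qed.

(* Multiplying a congruence modulo the maximal ideal by z gives an exact relation. *)
Lemma free_over_rcons_near_span L b : free_over (rcons L b) -> ~ near_span L b.
Proof.
move=> free [r /Hz_ann]; rewrite mulrBr /comb mulr_sumr => rel.
pose r' t := if (t < size L)%N then - (z * r t) else z.
have := free r'; rewrite comb_rcons /r' ltnn /comb.
rewrite (eq_bigr (fun t : 'I_(size L) => - (iota z * (iota (r t) * L`_t)))) => [|t _].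
  rewrite sumrN addrC rel => /(_ erefl (size L)); rewrite size_rcons ltnSn.
  by rewrite ltnn => /(_ erefl) /eqP; rewrite (negbTE Hz_neq0).
by rewrite ltn_ord rmorphN rmorphM mulNr mulrA.
Qed.

Lemma near_span_rcons L b u :
  near_span (rcons L b) u <-> exists r0, near_span L (u - iota r0 * b).
Proof.
split=> [[r] | [r0 [r]]].
  by rewrite comb_rcons opprD addrA addrAC => nu; exists (r (size L)), r.
pose r' t := if t == size L then r0 else r t.
exists r'; rewrite comb_rcons /r' eqxx (@eq_comb _ _ r) => [|t tL].
  by rewrite opprD addrA addrAC.
by rewrite ifN // neq_ltn tL.
Qed.

Lemma free_over_family n (f : 'I_n -> S) :
  (forall r : 'I_n -> R, \sum_(j < n) iota (r j) * f j = 0 -> forall j, r j = 0) ->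
  free_over [seq f j | j <- enum 'I_n].
Proof.
move=> free r; rewrite /comb -(big_mkord xpredT (fun t => iota (r t) * _`_t)).
rewrite size_map size_enum_ord big_mkord => rel t tn.
apply: (free (fun j => r j) _ (Ordinal tn)); apply: etrans rel; apply: eq_bigr => j _.
by rewrite (nth_map j) ?size_enum_ord // nth_ord_enum.
Qed.

Definition admissible (pts : seq (S * S)) :=
  (forall p, p \in pts -> A p.1) /\ forall x, free_over (fiber pts x).

Lemma admissible_rcons pts p : admissible (rcons pts p) -> admissible pts.
Proof.
move=> [pts_A pts_free]; split=> [q qpts | x].
  by apply: pts_A; rewrite mem_rcons in_cons qpts orbT.
by have := pts_free x; rewrite fiber_rcons; case: ifP => // _; apply: free_over_rcons.
Qed.

Lemma skew_eval_subZ F x u v r :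
  ev F x (u - iota r * v) = ev F x u - iota r * ev F x v.
Proof.
rewrite addrC -mulNr skew_eval_fixed_linear ?rmorphN ?Hsigma_iota //.
by rewrite mulNr addrC.
Qed.

Lemma sigma_sub_nonunit rho :
  (sigma rho - rho \isn't a GRing.unit) <-> exists r, rho - iota r \isn't a GRing.unit.
Proof.
split=> [|[r nr]]; first exact: Hresidue_fixed.
have -> : sigma rho - rho = sigma (rho - iota r) - (rho - iota r).
  by rewrite rmorphB Hsigma_iota opprB addrA subrK.
by apply: (nonunitB HS_local); rewrite ?Hsigma_nonunit.
Qed.

Lemma skew_eval_mulXsub_conj P x u g : A x -> g \is a GRing.unit ->
  (ev (skew_mulXsub sigma (sconj sigma x g) P) x u \isn't a GRing.unit) <->
  exists r, ev P x u - iota r * g \isn't a GRing.unit.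
Proof.
move=> Ax ug; rewrite skew_eval_mulXsub; set w := ev P x u.
have usg : sigma g \is a GRing.unit by rewrite rmorph_unit.
have -> : sigma w * x - sconj sigma x g * w = sigma g * x * (sigma (w / g) - w / g).
  have sgV : sigma g * (sigma g)^-1 = 1 by rewrite mulrV.
  by rewrite /sconj rmorphM rmorphV //; ring: sgV.
rewrite unitrM unitrM usg HA_unit //= sigma_sub_nonunit.
split=> [] [r nr]; exists r.
  by rewrite -[w](divrK ug) -mulrBl nonunitMr.
by rewrite -(mulrK ug (iota r)) -mulrBl nonunitMr.
Qed.

Lemma skew_eval_mulXsub_conj_other P y x u g :
  A y -> A x -> y <> x -> g \is a GRing.unit ->
  (ev (skew_mulXsub sigma (sconj sigma x g) P) y u \isn't a GRing.unit) <->
  ev P y u \isn't a GRing.unit.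
Proof.
move=> Ay Ax yx ug; rewrite skew_eval_mulXsub; set w := ev P y u.
split=> [|nw]; last first.
  apply: (nonunitB HS_local); first by apply: nonunitMr; apply: Hsigma_nonunit.
  exact: nonunitMl.
apply: contra => uw; have ud : g^-1 * w \is a GRing.unit by rewrite unitrM unitrV ug.
have -> : sigma w * y - sconj sigma x g * w =
    sigma g * (sconj sigma y (g^-1 * w) - x) * g^-1 * w.
  have sgV : sigma g * (sigma g)^-1 = 1 by rewrite mulrV ?rmorph_unit.
  have gV : g * g^-1 = 1 by rewrite mulrV.
  have wV : w * w^-1 = 1 by rewrite mulrV.
  rewrite /sconj rmorphM rmorphV // invrM ?unitrV // invrK; ring: sgV gV wV.
by rewrite !unitrM rmorph_unit // HA_nonconj // unitrV ug uw.
Qed.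

Definition annihilator (pts : seq (S * S)) (P : {poly S}) :=
  [/\ P \is monic, size P = (size pts).+1,
      forall p, p \in pts -> ev P p.1 p.2 = 0 &
      forall x, A x -> forall u,
        ev P x u \isn't a GRing.unit <-> near_span (fiber pts x) u].

Lemma annihilator_nil : annihilator [::] 1.
Proof.
split=> [||//|x _ u]; rewrite ?monic1 ?size_poly1 // skew_eval1.
by split=> [nu | [r]]; [exists (fun=> 0) |]; rewrite /comb big_ord0 subr0.
Qed.

Lemma annihilator_unit pts p P : admissible (rcons pts p) -> annihilator pts P ->
  ev P p.1 p.2 \is a GRing.unit.
Proof.
move=> [pts_A pts_free] [_ _ _ P_nonunit].
have Ap : A p.1 by apply: pts_A; rewrite mem_rcons mem_head.
have := pts_free p.1; rewrite fiber_rcons eqxx => /free_over_rcons_near_span far.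
by apply: contraT => /(P_nonunit _ Ap).
Qed.

(* (x - b) P takes the value sigma(g) p.1 - b g at p, where g is the value of P. *)
Lemma annihilator_rcons pts p P : admissible (rcons pts p) -> annihilator pts P ->
  annihilator (rcons pts p)
    (skew_mulXsub sigma (sconj sigma p.1 (ev P p.1 p.2)) P).
Proof.
move=> adm annP; have ug := annihilator_unit adm annP.
have [pts_A _] := adm; have Ap : A p.1 by apply: pts_A; rewrite mem_rcons mem_head.
case: annP => Pm Psize P_vanish P_nonunit.
set g := ev P p.1 p.2; have [P'm P'size] := skew_mulXsub_monic sigma (sconj sigma p.1 g) Pm.
split=> //; first by rewrite P'size Psize size_rcons.
  move=> q; rewrite mem_rcons in_cons skew_eval_mulXsub => /predU1P[-> | qpts].
    by rewrite -/g /sconj divrK // subrr.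
  by rewrite P_vanish // rmorph0 mul0r mulr0 subrr.
move=> y Ay u; rewrite fiber_rcons; have [<- | yx] := eqVneq p.1 y; last first.
  rewrite skew_eval_mulXsub_conj_other //; first exact: P_nonunit.
  by move=> e; rewrite e eqxx in yx.
rewrite skew_eval_mulXsub_conj // near_span_rcons.
split=> [] [r nr]; exists r.
  by apply/(P_nonunit _ Ap); rewrite skew_eval_subZ.
by move/(P_nonunit _ Ap): nr; rewrite skew_eval_subZ.
Qed.

Lemma annihilator_exists pts : admissible pts -> exists P, annihilator pts P.
Proof.
elim/last_ind: pts => [|pts p IH] adm; first by exists 1; apply: annihilator_nil.
have [P annP] := IH (admissible_rcons adm).
by eexists; apply: annihilator_rcons annP.
Qed.

(* With P the annihilator of all nodes but the last and d the top coefficient of D,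
   D - d P vanishes by induction, and then d = 0 since P is a unit at the last node. *)
Lemma vanishing_eq0 pts (D : {poly S}) : admissible pts -> (size D <= size pts)%N ->
  (forall p, p \in pts -> ev D p.1 p.2 = 0) -> D = 0.
Proof.
elim/last_ind: pts D => [|pts p IH] D adm; first by move/size_poly_leq0P.
rewrite size_rcons => Dsize D_vanish.
have [P annP] := annihilator_exists (admissible_rcons adm).
have ug := annihilator_unit adm annP.
case: annP => Pm Psize P_vanish _.
set d := D`_(size pts).
have D_eq : D = d *: P.
  apply/eqP; rewrite -subr_eq0; apply/eqP/IH; first exact: admissible_rcons adm.
    apply/leq_sizeP => j; rewrite leq_eqVlt => /orP[/eqP <- | j_gt].
      have P_lead : P`_(size pts) = 1 by rewrite -(monicP Pm) lead_coefE Psize.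
      by rewrite coefB coefZ P_lead mulr1 subrr.
    by rewrite coefB coefZ !nth_default ?mulr0 ?subr0 ?Psize // (leq_trans Dsize).
  move=> q qpts; rewrite skew_evalB skew_evalZ P_vanish // mulr0 subr0.
  by apply: D_vanish; rewrite mem_rcons in_cons qpts orbT.
have := D_vanish p; rewrite mem_rcons mem_head D_eq skew_evalZ => /(_ erefl).
by move=> /(canRL (mulrK ug)); rewrite mul0r => ->; rewrite scale0r.
Qed.

Lemma interpolation_exists (ds : seq (S * S * S)) : admissible (map fst ds) ->
  exists2 F : {poly S}, (size F <= size ds)%N &
    forall t, t \in ds -> ev F t.1.1 t.1.2 = t.2.
Proof.
elim/last_ind: ds => [|ds t IH]; first by exists 0; rewrite ?size_poly0.
rewrite map_rcons => adm; have adm' := admissible_rcons adm.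
have [F0 F0size F0_interp] := IH adm'.
have [P annP] := annihilator_exists adm'.
have ug := annihilator_unit adm annP.
case: annP => _ Psize P_vanish _; rewrite size_map in Psize.
set g := ev P t.1.1 t.1.2 in ug.
exists (F0 + ((t.2 - ev F0 t.1.1 t.1.2) / g) *: P).
  rewrite size_rcons (leq_trans (size_polyD _ _)) // geq_max (leq_trans F0size) //.
  by rewrite (leq_trans (size_scale_leq _ _)) ?Psize.
move=> t'; rewrite mem_rcons in_cons skew_evalD skew_evalZ => /predU1P[-> | t'ds].
  by rewrite -/g divrK // addrC subrK.
by rewrite F0_interp // P_vanish ?mulr0 ?addr0 // (map_f fst).
Qed.

Lemma skew_interpolation (ds : seq (S * S * S)) : admissible (map fst ds) ->
  exists! F : {poly S}, (size F <= size ds)%N /\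
    forall t, t \in ds -> ev F t.1.1 t.1.2 = t.2.
Proof.
move=> adm; have [F Fsize F_interp] := interpolation_exists adm.
exists F; split=> // G [Gsize G_interp]; apply/eqP; rewrite -subr_eq0; apply/eqP.
apply: (vanishing_eq0 adm).
  by rewrite size_map (leq_trans (size_polyD _ _)) // size_polyN geq_max Fsize.
by move=> _ /mapP[t tds ->]; rewrite skew_evalB F_interp ?G_interp ?subrr.
Qed.

End Interpolation.

Section ChainRing.
Variable R : finComUnitRingType.
Hypothesis HR : chain_ring R.

Definition principal_ideal (x : R) : {set R} := [set x * r | r : R].

Lemma principal_idealP x : is_ideal (principal_ideal x).
Proof.
split; first by apply/imsetP; exists 0; rewrite ?mulr0.
split=> [u v /imsetP[r1 _ ->] /imsetP[r2 _ ->] | r u /imsetP[r1 _ ->]].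
  by apply/imsetP; exists (r1 + r2); rewrite ?mulrDr.
by apply/imsetP; exists (r * r1); rewrite // mulrCA.
Qed.

Lemma mem_principal_ideal x : x \in principal_ideal x.
Proof. by apply/imsetP; exists 1; rewrite ?mulr1. Qed.

Lemma chain_ring_local : local_ring R.
Proof.
have sum_nonunit u v : v \isn't a GRing.unit ->
    principal_ideal u \subset principal_ideal v -> u + v \isn't a GRing.unit.
  move=> nv /subsetP/(_ u (mem_principal_ideal u))/imsetP[r _ ->].
  by rewrite -[X in _ + X]mulr1 -mulrDr nonunitMr.
move=> x y nx ny.
case/orP: (HR (principal_idealP x) (principal_idealP y)) => sub.
  exact: sum_nonunit.
by rewrite addrC; apply: sum_nonunit.
Qed.

(* z generates a minimal nonzero principal ideal. *)
Lemma chain_ring_socle :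
  exists2 z : R, z != 0 & forall x, x \isn't a GRing.unit -> z * x = 0.
Proof.
have [z z_neq0 z_min] :=
  @arg_minnP R 1 (fun z : R => z != 0) (fun z => #|principal_ideal z|) (oner_neq0 R).
exists z => // x nx; apply/eqP; apply: contraT => zx_neq0.
have sub : principal_ideal (z * x) \subset principal_ideal z.
  by apply/subsetP => u /imsetP[r _ ->]; apply/imsetP; exists (x * r); rewrite ?mulrA.
have /eqP same : principal_ideal (z * x) == principal_ideal z.
  by rewrite eqEcard sub z_min.
have := mem_principal_ideal z; rewrite -same => /imsetP[r _ z_eq].
have unit_1sub : 1 - x * r \is a GRing.unit.
  by apply: (unitrD_nonunit chain_ring_local); rewrite ?unitr1 // unitrN nonunitMr.
move: z_neq0; rewrite -[z](mulrK unit_1sub) mulrBr mulr1 mulrA -z_eq subrr.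
by rewrite mul0r eqxx.
Qed.

Lemma resq_ge2 : (2 <= resq R)%N.
Proof.
set m := max_ideal R.
have m_gt0 : (0 < #|m|)%N by apply/card_gt0P; exists 0; rewrite inE unitr0.
set m1 := [set 1 + x | x in m].
have card_m1 : #|m1| = #|m| by apply: card_imset; apply: addrI.
have disjoint_m : m :&: m1 = set0.
  apply/setP => y; rewrite !inE; apply/negP => /andP[ny /imsetP[x mx y_eq]].
  rewrite inE in mx; move: ny; rewrite y_eq.
  by rewrite (unitrD_nonunit chain_ring_local) ?unitr1.
have : (#|m :|: m1| <= #|R|)%N by apply: max_card.
rewrite cardsU disjoint_m cards0 subn0 card_m1 addnn -muln2 mulnC => card_le.
by rewrite /resq -/m; apply: leq_trans (leq_div2r _ card_le); rewrite mulnK.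
Qed.

Definition residue_class (r : R) : {set R} := [set y | y - r \isn't a GRing.unit].

Definition class_rep (K : {set R}) : R := odflt 0 [pick y in K].

Lemma residue_class_eq r r' :
  (residue_class r == residue_class r') = (r - r' \isn't a GRing.unit).
Proof.
have Rloc := chain_ring_local.
apply/eqP/idP => [e | nrr'].
  have : r \in residue_class r by rewrite inE subrr unitr0.
  by rewrite e inE.
apply/setP => y; rewrite !inE; apply/idP/idP => ny.
  by have := Rloc _ _ ny nrr'; rewrite addrA subrK.
rewrite -unitrN opprB in nrr'.
by have := Rloc _ _ ny nrr'; rewrite addrA subrK.
Qed.

Lemma residue_class_rep r : residue_class (class_rep (residue_class r)) = residue_class r.
Proof.
apply/eqP; rewrite residue_class_eq /class_rep.
by case: pickP => [y | /(_ r)]; rewrite inE ?subrr ?unitr0.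
Qed.

Lemma residue_representatives : exists s : seq R,
  pairwise (fun x y => x - y \is a GRing.unit) s /\ (resq R <= size s)%N.
Proof.
set C := [set residue_class r | r : R]; set m := max_ideal R.
exists [seq class_rep K | K <- enum C]; split.
  rewrite pairwise_map; apply: (@sub_in_pairwise _ (mem C) [rel K K' | K != K']).
  - move=> _ _ /imsetP[r _ ->] /imsetP[r' _ ->] /=; apply: contraR.
    by rewrite -residue_class_eq !residue_class_rep.
  - by apply/allP => K; rewrite mem_enum.
  - by rewrite -uniq_pairwise enum_uniq.
have m_gt0 : (0 < #|m|)%N by apply/card_gt0P; exists 0; rewrite inE unitr0.
have card_R : (#|R| <= #|C| * #|m|)%N.
  pose split_class r := (residue_class r, r - class_rep (residue_class r)).
  have split_inj : injective split_class by move=> r r' [eK]; rewrite eK; apply: subIr.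
  rewrite -cardsX -cardsT -(card_imset setT split_inj); apply: subset_leq_card.
  apply/subsetP => _ /imsetP[r _ ->]; rewrite inE /= imset_f //= inE.
  by rewrite -residue_class_eq residue_class_rep.
rewrite size_map -cardE /resq -/m.
by apply: leq_trans (leq_div2r _ card_R) _; rewrite mulnK.
Qed.

End ChainRing.

Section GaloisExtension.
Variables (R S : finComUnitRingType) (iota : {rmorphism R -> S}).
Variable sigma : {rmorphism S -> S}.
Hypothesis HR : chain_ring R.
Hypothesis Hiota : injective iota.
Hypothesis Hsigma_bij : bijective sigma.
Hypothesis Hsigma_fix : forall s : S, sigma s = s <-> exists r : R, s = iota r.
Hypothesis Hsigma_frob : forall y : S, ext_ideal iota (sigma y - y ^+ resq R).

Local Notation q := (resq R).

Lemma sigma_iota r : sigma (iota r) = iota r.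
Proof. by apply/Hsigma_fix; exists r. Qed.

Lemma sigma_finite_order :
  exists2 M, (0 < M)%N & forall k s, iter (M * k) sigma s = s.
Proof.
have sigma_inj : injective sigma by apply: bij_inj.
exists #[perm sigma_inj]%g => [|k s]; first exact: order_gt0.
by rewrite -(eq_iter (permE sigma_inj)) -permX expgM expg_order expg1n perm1.
Qed.

Section SocleAnnihilator.
Variable z : R.
Hypothesis Hz_neq0 : z != 0.
Hypothesis Hz_socle : forall x : R, x \isn't a GRing.unit -> z * x = 0.

Local Notation ann x := (iota z * x == 0).

Lemma annD x y : ann x -> ann y -> ann (x + y).
Proof. by rewrite mulrDr => /eqP-> /eqP->; rewrite addr0. Qed.

Lemma annB x y : ann x -> ann y -> ann (x - y).
Proof. by move=> ax ay; rewrite annD // mulrN oppr_eq0. Qed.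

Lemma annMl x y : ann x -> ann (y * x).
Proof. by rewrite mulrCA => /eqP->; rewrite mulr0. Qed.

Lemma annMr x y : ann x -> ann (x * y).
Proof. by rewrite [x * y]mulrC; apply: annMl. Qed.

Lemma ann_ext_ideal s : ext_ideal iota s -> ann s.
Proof.
move=> [k [r [t [r_max ->]]]]; rewrite mulr_sumr big1 // => i _.
by rewrite mulrA -rmorphM Hz_socle ?rmorph0 ?mul0r //; have := r_max i; rewrite inE.
Qed.

Lemma ann_nonunit x : ann x -> x \isn't a GRing.unit.
Proof.
move=> /eqP zx0; apply: contraL Hz_neq0 => ux.
by rewrite -(inj_eq Hiota) rmorph0 -[iota z](mulrK ux) zx0 mul0r eqxx.
Qed.

Lemma ann_iter_frobenius y j : ann (iter j sigma y - y ^+ (q ^ j)).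
Proof.
elim: j => [|j IH] /=; first by rewrite expn0 expr1 subrr mulr0.
set Y := iter j sigma y.
have -> : sigma Y - y ^+ (q ^ j.+1) =
    (sigma Y - Y ^+ q) + (Y ^+ q - (y ^+ (q ^ j)) ^+ q).
  by rewrite -exprM -expnSr addrA subrK.
apply: annD; first exact: ann_ext_ideal.
by rewrite subrXX; apply: annMr.
Qed.

Lemma ann_prodB n (f g : nat -> S) : (forall i, ann (f i - g i)) ->
  ann (\prod_(i < n) f i - \prod_(i < n) g i).
Proof.
move=> fg; elim: n => [|n IH]; first by rewrite !big_ord0 subrr mulr0.
rewrite !big_ord_recr /=; set F := \prod_(i < n) f i; set G := \prod_(i < n) g i.
have -> : F * f n - G * g n = (F - G) * f n + G * (f n - g n) by ring.
by apply: annD; [apply: annMr | apply: annMl].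
Qed.

(* The product N of the sigma-orbit of y is fixed by sigma, hence lies in R and is
   killed by z; by the Frobenius congruence N = y ^+ E modulo the annihilator of z,
   and y = y ^+ (q ^ K) is a multiple of y ^+ E when the order of sigma divides K. *)
Lemma nonunit_ann y : y \isn't a GRing.unit -> ann y.
Proof.
move=> ny; have [[|M] // _ sigma_period] := sigma_finite_order.
pose N := \prod_(j < M.+1) iter j sigma y.
have sigma_N : sigma N = N.
  rewrite /N rmorph_prod big_ord_recr big_ord_recl /= -iterS.
  have -> : iter M.+1 sigma y = y by have := sigma_period 1%N y; rewrite muln1.
  by rewrite mulrC; congr (_ * _); apply: eq_bigr.
have [r N_eq] := (Hsigma_fix N).1 sigma_N.
have ann_N : ann N.
  have nr : r \isn't a GRing.unit.
    apply: contra ny => ur; move: (rmorph_unit iota ur).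
    by rewrite -N_eq /N big_ord_recl unitrM => /andP[].
  by rewrite N_eq -rmorphM Hz_socle // rmorph0.
pose E := (\sum_(j < M.+1) q ^ j)%N.
have ann_yE : ann (y ^+ E).
  have := ann_prodB M.+1 (ann_iter_frobenius y).
  rewrite -/N prodrXr -/E => ann_NB.
  by rewrite -[y ^+ E](subKr N); apply: annB.
pose K := (M.+1 * E)%N.
have E_le : (E <= q ^ K)%N.
  apply: leq_trans (ltnW (ltn_expl K (resq_ge2 HR))).
  by rewrite /K leq_pmull.
have := ann_iter_frobenius y K; rewrite sigma_period -(subnKC E_le) exprD.
move=> ann_diff; rewrite -[y](subrK (y ^+ E * y ^+ (q ^ K - E))).
by apply: annD => //; apply: annMr.
Qed.

Lemma nonunitE x : (x \isn't a GRing.unit) = ann x.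
Proof. by apply/idP/idP; [apply: nonunit_ann | apply: ann_nonunit]. Qed.

Lemma extension_local : local_ring S.
Proof. by move=> x y; rewrite !nonunitE; apply: annD. Qed.

Lemma sigma_nonunit x : x \isn't a GRing.unit -> sigma x \isn't a GRing.unit.
Proof.
by rewrite !nonunitE => /eqP zx0; rewrite -(sigma_iota z) -rmorphM zx0 rmorph0.
Qed.

(* The elements congruent to an element of R are the roots of X^q - X modulo
   the maximal ideal; a monic polynomial of degree q has at most q of them. *)
Lemma residue_fixed rho : sigma rho - rho \isn't a GRing.unit ->
  exists r, rho - iota r \isn't a GRing.unit.
Proof.
move=> nrho; case: (pickP (fun r => rho - iota r \isn't a GRing.unit)) => [r | none].
  by exists r.
have [s [incong_s size_s]] := residue_representatives HR.
have q_gt1 : (1 < q)%N := resq_ge2 HR.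
pose p : {poly S} := 'X^q - 'X.
have X_small : (size (- 'X : {poly S}) < size ('X^q : {poly S}))%N.
  by rewrite size_polyN size_polyX size_polyXn ltnS.
have root_p x : sigma x - x \isn't a GRing.unit -> p.[x] \isn't a GRing.unit.
  move=> nx; rewrite /p !hornerE -(subrKA (sigma x)) addrC -opprB.
  by rewrite (nonunitB extension_local) // nonunitE ann_ext_ideal.
have : (size (rho :: map iota s) < size p)%N.
  apply: (monic_nonunit_roots extension_local).
  - by rewrite monicE lead_coefDl // lead_coefXn.
  - rewrite /= all_map pairwise_map; apply/andP; split.
      by apply/allP => r _ /=; apply/negbFE/none.
    by apply: sub_pairwise incong_s => x y /=; rewrite -rmorphB; apply: rmorph_unit.
  - move=> x /predU1P[-> | /mapP[r _ ->]]; apply: root_p => //.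
    by rewrite sigma_iota subrr unitr0.
rewrite /= size_map /p size_polyDl // size_polyXn ltnS => size_lt.
by move: size_s; rewrite leqNgt size_lt.
Qed.

End SocleAnnihilator.

Lemma galois_skew_interpolation (A : S -> Prop) :
  (forall x, A x -> x \is a GRing.unit) ->
  (forall x y, A x -> A y -> x <> y ->
     forall d, d \is a GRing.unit -> sconj sigma x d - y \is a GRing.unit) ->
  forall ds : seq (S * S * S), admissible iota A (map fst ds) ->
  exists! F : {poly S}, (size F <= size ds)%N /\
    forall t, t \in ds -> skew_eval sigma F t.1.1 t.1.2 = t.2.
Proof.
move=> A_unit A_nonconj ds adm; have [z z_neq0 z_socle] := chain_ring_socle HR.
have z_ann x : x \isn't a GRing.unit -> iota z * x = 0.
  by rewrite (nonunitE z_neq0 z_socle) => /eqP.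
exact: (@skew_interpolation R S iota sigma (extension_local z_neq0 z_socle)
  (sigma_nonunit z_neq0 z_socle) sigma_iota (residue_fixed z_neq0 z_socle)
  z z_neq0 z_ann A A_unit A_nonconj ds adm).
Qed.

End GaloisExtension.

Lemma fiber_cat (T : eqType) (s1 s2 : seq (T * T)) x :
  fiber (s1 ++ s2) x = fiber s1 x ++ fiber s2 x.
Proof. by rewrite /fiber filter_cat map_cat. Qed.

Lemma fiber_flatten (T : eqType) (ss : seq (seq (T * T))) x :
  fiber (flatten ss) x = flatten [seq fiber s x | s <- ss].
Proof. by elim: ss => //= s ss IH; rewrite fiber_cat IH. Qed.

Lemma fiber_map_pair (I : Type) (T : eqType) (y : T) (f : I -> T) s x :
  fiber [seq (y, f j) | j <- s] x = if y == x then map f s else [::].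
Proof.
rewrite /fiber; case: eqP => [<- | /eqP yx]; elim: s => //= j s IH.
  by rewrite eqxx /= IH.
by rewrite (negbTE yx) IH.
Qed.

Lemma flatten_map_if (I T : Type) (P : pred I) (B : I -> seq T) r :
  flatten [seq if P i then B i else [::] | i <- r] = flatten [seq B i | i <- r & P i].
Proof. by elim: r => //= i r IH; case: ifP; rewrite /= IH. Qed.

Section BlockData.
Variables (T : eqType) (l : nat) (ns : 'I_l -> nat) (a : 'I_l -> T).
(* Otherwise the block index of beta and c would be implicit. *)
Local Unset Implicit Arguments.
Variables (beta c : forall i, 'I_(ns i) -> T).
Local Set Implicit Arguments.

Definition block_data : seq (T * T * T) :=
  flatten [seq [seq (a i, beta i j, c i j) | j <- enum 'I_(ns i)] | i <- enum 'I_l].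

Lemma block_dataP t :
  reflect (exists i (j : 'I_(ns i)), t = (a i, beta i j, c i j)) (t \in block_data).
Proof.
apply: (iffP flatten_mapP) => [[i _ /mapP[j _ ->]] | [i [j ->]]]; first by exists i, j.
by exists i; rewrite ?mem_enum //; apply/mapP; exists j; rewrite ?mem_enum.
Qed.

Lemma size_block_data : size block_data = (\sum_(i < l) ns i)%N.
Proof.
rewrite size_flatten /shape -map_comp sumnE big_map big_enum /=.
by apply: eq_bigr => i _; rewrite size_map size_enum_ord.
Qed.

Lemma fiber_block_data x : injective a ->
  fiber (map fst block_data) x =
    if [pick i | a i == x] is Some i then [seq beta i j | j <- enum 'I_(ns i)] else [::].
Proof.
move=> a_inj; rewrite map_flatten fiber_flatten -2!map_comp.
under eq_map => i do rewrite /= -map_comp fiber_map_pair.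
rewrite flatten_map_if; case: pickP => [i0 /eqP <- | none].
  rewrite (eq_filter (a2 := pred1 i0)) => [|i]; last by rewrite /= (inj_eq a_inj).
  by rewrite filter_pred1_uniq ?enum_uniq ?mem_enum //= cats0.
by rewrite (eq_filter none) filter_pred0.
Qed.

End BlockData.

Section NonConjugateFamily.
Variables (S : finComUnitRingType) (sigma : {rmorphism S -> S}).
Variables (l : nat) (a : 'I_l -> S).
Hypothesis a_nonconj : forall b, b \is a GRing.unit -> forall i j : 'I_l, (i < j)%N ->
  a i - sconj sigma (a j) b \is a GRing.unit.

Lemma sconj1 x : sconj sigma x 1 = x.
Proof. by rewrite /sconj rmorph1 invr1 mul1r mulr1. Qed.

Lemma sconjV_sub d x y : d \is a GRing.unit ->
  sconj sigma x d - y = sigma d * (x - sconj sigma y d^-1) * d^-1.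
Proof.
move=> ud; have sdV : sigma d * sigma d^-1 = 1 by rewrite -rmorphM divrr // rmorph1.
have dV : d * d^-1 = 1 by rewrite divrr.
by rewrite /sconj invrK; ring: sdV dV.
Qed.

Lemma nonconj_injective : injective a.
Proof.
move=> i j aij; apply/eqP; apply: contraT; rewrite neq_ltn.
by case/orP=> ij; have := a_nonconj (unitr1 S) ij; rewrite sconj1 aij subrr unitr0.
Qed.

Lemma nonconj_neq i j d : i != j -> d \is a GRing.unit ->
  sconj sigma (a i) d - a j \is a GRing.unit.
Proof.
rewrite neq_ltn => /orP[ij | ji] ud; last by rewrite -opprB unitrN a_nonconj.
by rewrite sconjV_sub // !unitrM rmorph_unit // a_nonconj ?unitrV.
Qed.

End NonConjugateFamily.

Theorem theorem4
  (R S : finComUnitRingType) (iota : {rmorphism R -> S})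
  (h : {poly R}) (theta : S) (sigma : {rmorphism S -> S})
  (HR : chain_ring R)
  (Hiota : injective iota)
  (Hh_monic : h \is monic)
  (Hh_irr : irreducible_mod_m h)
  (HS : is_quotient_by iota h theta)
  (Hsigma_bij : bijective sigma)
  (Hsigma_fix : forall s : S, sigma s = s <-> exists r : R, s = iota r)
  (Hsigma_gen : forall tau : {rmorphism S -> S}, bijective tau ->
       (forall r : R, tau (iota r) = iota r) ->
       exists k : nat, forall s : S, tau s = iter k sigma s)
  (Hsigma_frob : forall y : S, ext_ideal iota (sigma y - y ^+ resq R))
  (l : nat) (ns : 'I_l -> nat)
  (a : 'I_l -> S) (beta : forall i : 'I_l, 'I_(ns i) -> S)
  (c : forall i : 'I_l, 'I_(ns i) -> S)
  (Ha_unit : forall i, a i \is a GRing.unit)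
  (Hi : forall (b : S), b \is a GRing.unit -> forall i j : 'I_l, (i < j)%N ->
          (a i - sconj sigma (a j) b) \is a GRing.unit)
  (Hii : forall i : 'I_l, forall r : 'I_(ns i) -> R,
          \sum_(j < ns i) iota (r j) * beta i j = 0 -> forall j, r j = 0) :
  exists! F : {poly S},
    (size F <= \sum_(i < l) ns i)%N /\
    forall (i : 'I_l) (j : 'I_(ns i)), skew_eval sigma F (a i) (beta i j) = c i j.
Proof.
have a_inj := nonconj_injective Hi.
pose A x := exists i, x = a i.
have A_nonconj x y : A x -> A y -> x <> y ->
    forall d, d \is a GRing.unit -> sconj sigma x d - y \is a GRing.unit.
  move=> [i ->] [j ->] aij d ud; apply: nonconj_neq => //.
  by apply/eqP => ij; apply: aij; rewrite ij.
have adm : admissible iota A (map fst (block_data a beta c)).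
  split=> [_ /mapP[_ /block_dataP[i [j ->]] ->] | x]; first by exists i.
  rewrite fiber_block_data //; case: pickP => [i _ | _ r _ //].
  exact: free_over_family (Hii i).
have [|F [[F_size F_interp] F_uniq]] :=
  galois_skew_interpolation HR Hiota Hsigma_bij Hsigma_fix Hsigma_frob _ A_nonconj adm.
  by move=> _ [i ->]; apply: Ha_unit.
exists F; split.
  split=> [|i j]; first by rewrite -(size_block_data a beta c).
  by apply: (F_interp (a i, beta i j, c i j)); apply/block_dataP; exists i, j.
move=> G [G_size G_interp]; apply: F_uniq; split; first by rewrite size_block_data.
by move=> _ /block_dataP[i [j ->]]; apply: G_interp.
Qed.
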